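(* Let $(X,d)$ be a compact metric space with $\operatorname{diam}(X,d)=1/2$ and let $\mathcal S$ be its hyperbolic filling with horizontal parameter $\lambda>1$ and vertical parameter $a>1$. (a) If $(z,n+1)$ is a child of $(x,n)$, then $d(x,z)<a^{-n}$. If $(y,k)$ is a descendant of $(x,n)$ (for some $k>n$), then $d(x,y)<\frac{a}{a-1}a^{-n}$. (b) If $\lambda\ge2+2\lambda a^{-1}$ and $D_2((x,n+1),(y,n+1))\le1$, then $D_2((x_0,n),(y_0,n))\le1$, where $(x_0,n),(y_0,n)$ are the parents of $(x,n+1),(y,n+1)$. Similarly, if $\lambda\ge2+4\lambda a^{-1}$ and $D_2((x,n+1),(y,n+1))\le2$, then $D_2((x_0,n),(y_0,n))\le1$. (c) Let $\lambda\ge6$. If $(x,n+1),(y,n+1)\in\mathcal S_{n+1}$ satisfy $d(x,y)\le4a^{-n}$ and $(x_0,n),(y_0,n)$ are their parents, then $D_2((x_0,n),(y_0,n))\le1$. (d) If $\lambda>1+a^{-1}$, then $D_1\le D_2\le2D_1$. (e) Let $\lambda>1+a^{-1}$. If $w\in\mathcal S_{n+1}$ and $u,v\in\mathcal S_n$ satisfy $D_1(u,w)=1$ and $D_2(v,w)=1$, then $D_2(u,v)\le1$.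
   Context: Hyperbolic filling: fix an increasing sequence $X_0\subset X_1\subset\cdots$ with each $X_n$ a maximal $a^{-n}$-separated subset of $X$ (distinct points at distance $\ge a^{-n}$, maximal for inclusion). $\mathcal S_n=\{(x,n):x\in X_n\}$, $\mathcal S=\bigcup_{n\ge0}\mathcal S_n$. For each $(x,n)$ with $n\ge1$ a parent $(y,n-1)\in\mathcal S_{n-1}$ is fixed with $d(x,y)=\min_{z\in X_{n-1}}d(x,z)$; $(x,n)$ is then a child of $(y,n-1)$; $(x,n)$ is a descendant of $(y,k)$, $n>k$, if they are linked by a chain of parent–child relations. $D_1$ is the graph distance of the graph on $\mathcal S$ where distinct $(x,n),(y,m)$ are adjacent iff either $n=m$ and $B(x,\lambda a^{-n})\cap B(y,\lambda a^{-n})\ne\emptyset$, or $|n-m|=1$ and $B(x,a^{-n})\cap B(y,a^{-m})\ne\emptyset$. $D_2$ is the graph distance of the graph on $\mathcal S$ whose edges are the parent–child pairs and the pairs of distinct $(x,n),(y,n)$ with $B(x,\lambda a^{-n})\cap B(y,\lambda a^{-n})\neq\emptyset$. *)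

From Stdlib Require Import Reals Lra Lia List ClassicalEpsilon.
Open Scope R_scope.

Section Defs.
Context {T : Type}.

Definition is_metric (d : T -> T -> R) : Prop :=
  (forall x y, d x y = 0 <-> x = y) /\
  (forall x y, d x y = d y x) /\
  (forall x y z, d x z <= d x y + d y z).

Definition open_in (d : T -> T -> R) (U : T -> Prop) : Prop :=
  forall x, U x -> exists r, 0 < r /\ forall y, d x y < r -> U y.

Definition compact_metric (d : T -> T -> R) : Prop :=
  forall (I : Type) (U : I -> T -> Prop),
    (forall i, open_in d (U i)) -> (forall x, exists i, U i x) ->
    exists l : list I, forall x, exists i, In i l /\ U i x.

Definition is_diam (d : T -> T -> R) (D : R) : Prop :=
  is_lub (fun r => exists x y, r = d x y) D.

Definition separated (d : T -> T -> R) (r : R) (A : T -> Prop) : Prop :=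
  forall x y, A x -> A y -> x <> y -> r <= d x y.

Definition max_separated (d : T -> T -> R) (r : R) (A : T -> Prop) : Prop :=
  separated d r A /\
  forall B : T -> Prop, separated d r B -> (forall x, A x -> B x) ->
    forall x, B x -> A x.

(* Xs n = X_n ; par n x = the chosen parent (in X_n) of (x, n+1) *)
Definition is_filling (d : T -> T -> R) (a : R) (Xs : nat -> T -> Prop)
    (par : nat -> T -> T) : Prop :=
  (forall n x, Xs n x -> Xs (S n) x) /\
  (forall n, max_separated d (/ a ^ n) (Xs n)) /\
  (forall n x, Xs (S n) x ->
     Xs n (par n x) /\ forall z, Xs n z -> d x (par n x) <= d x z).

Definition vert (Xs : nat -> T -> Prop) (u : T * nat) : Prop :=
  Xs (snd u) (fst u).

Definition balls_meet (d : T -> T -> R) (x : T) (r : R) (y : T) (s : R) : Prop :=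
  exists z, d x z < r /\ d y z < s.

Definition child (Xs : nat -> T -> Prop) (par : nat -> T -> T)
    (n : nat) (x z : T) : Prop :=
  Xs n x /\ Xs (S n) z /\ par n z = x.

(* ancestor at level n of a point y of level n + j *)
Fixpoint anc (par : nat -> T -> T) (n j : nat) (y : T) : T :=
  match j with
  | O => y
  | S j' => anc par n j' (par (n + j')%nat y)
  end.

Definition descendant (Xs : nat -> T -> Prop) (par : nat -> T -> T)
    (n : nat) (x : T) (k : nat) (y : T) : Prop :=
  (n < k)%nat /\ Xs n x /\ Xs k y /\ anc par n (k - n) y = x.

Definition edge1 (d : T -> T -> R) (lam a : R) (Xs : nat -> T -> Prop)
    (u v : T * nat) : Prop :=
  vert Xs u /\ vert Xs v /\ u <> v /\
  ( (snd u = snd v /\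
       balls_meet d (fst u) (lam / a ^ snd u) (fst v) (lam / a ^ snd v))
  \/ ((snd u = S (snd v) \/ snd v = S (snd u)) /\
       balls_meet d (fst u) (/ a ^ snd u) (fst v) (/ a ^ snd v)) ).

Definition edge2 (d : T -> T -> R) (lam a : R) (Xs : nat -> T -> Prop)
    (par : nat -> T -> T) (u v : T * nat) : Prop :=
  vert Xs u /\ vert Xs v /\ u <> v /\
  ( (snd v = S (snd u) /\ par (snd u) (fst v) = fst u)
  \/ (snd u = S (snd v) /\ par (snd v) (fst u) = fst v)
  \/ (snd u = snd v /\
       balls_meet d (fst u) (lam / a ^ snd u) (fst v) (lam / a ^ snd v)) ).

End Defs.

Inductive walk {V : Type} (E : V -> V -> Prop) : nat -> V -> V -> Prop :=
  | walk0 : forall u, walk E 0 u u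
  | walkS : forall k u w v, E u w -> walk E k w v -> walk E (S k) u v.

(* graph distance: the least length of a walk from u to v
   (unspecified if v is unreachable from u; the fillings' graphs are connected) *)
Definition gdist {V : Type} (E : V -> V -> Prop) (u v : V) : nat :=
  epsilon (inhabits 0%nat)
    (fun k => walk E k u v /\ forall j, walk E j u v -> (k <= j)%nat).

(* A point of level n+1 lies within a^-n of its parent, because the maximal
   a^-n-separated set X_n is an a^-n-net; summing the geometric series along
   the ancestor chain gives (a).  For (b) and (c), two points of level n+1 at
   distance at most (lam - 2) a^-n have parents within lam a^-n of each other,
   so the parents coincide or are horizontal neighbours; a D_2-walk of length
   at most 2 between points of level n+1 either forces a common parent or
   moves only horizontally, and then bounds their distance by 2 lam a^-(n+1)
   per step.  For (d), every D_2-edge is a D_1-edge, while a vertical D_1-edge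
   from (x, n+1) to (y, n) is replaced by the parent edge followed by a
   horizontal edge from the parent of x to y, which exists as soon as
   lam > 1 + 1/a.  The same estimate gives (e). *)

From Stdlib Require Import Reals Lra Lia Classical Wf_nat ClassicalEpsilon.
Open Scope R_scope.

Section Walks.
Context {V : Type} (E : V -> V -> Prop).

Lemma walk_cat j k u w v : walk E j u w -> walk E k w v -> walk E (j + k) u v.
Proof. induction 1; intros; simpl; auto. econstructor; eauto. Qed.

Lemma walk_edge u v : E u v -> walk E 1 u v.
Proof. intros; econstructor; eauto; constructor. Qed.

Lemma walk_rev k u v : (forall x y, E x y -> E y x) -> walk E k u v -> walk E k v u.
Proof.
  intros E_sym H; induction H as [|k u w v Euw _ IH]; [constructor|].
  replace (S k) with (k + 1)%nat by lia.
  apply walk_cat with w; auto using walk_edge.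
Qed.

Lemma walk_0_inv u v : walk E 0 u v -> u = v.
Proof. now inversion 1. Qed.

Lemma walk_1_inv u v : walk E 1 u v -> E u v.
Proof. inversion 1 as [|k u' w v' Euw W]; subst. now apply walk_0_inv in W; subst. Qed.

Lemma walk_2_inv u v : walk E 2 u v -> exists w, E u w /\ E w v.
Proof. inversion 1; subst. eauto using walk_1_inv. Qed.

Lemma walk_min_length u v n :
  walk E n u v -> exists k, walk E k u v /\ forall j, walk E j u v -> (k <= j)%nat.
Proof.
  induction n as [n IH] using lt_wf_ind; intros Hn.
  destruct (classic (exists j, (j < n)%nat /\ walk E j u v)) as [[j [Hj Hw]]|Hno].
  - exact (IH j Hj Hw).
  - exists n; split; auto. intros j Hj.
    destruct (Nat.lt_ge_cases j n); auto. exfalso; eauto.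
Qed.

Lemma gdist_spec u v n :
  walk E n u v ->
  walk E (gdist E u v) u v /\ forall j, walk E j u v -> (gdist E u v <= j)%nat.
Proof. intros H. unfold gdist. apply epsilon_spec, (walk_min_length u v n H). Qed.

Lemma gdist_walk u v n : walk E n u v -> walk E (gdist E u v) u v.
Proof. intros H; apply (gdist_spec u v n H). Qed.

Lemma gdist_le u v n : walk E n u v -> (gdist E u v <= n)%nat.
Proof. intros H; now apply (gdist_spec u v n H). Qed.

Lemma gdist_le_1 u v : u = v \/ E u v -> (gdist E u v <= 1)%nat.
Proof.
  intros [<-|Huv].
  - apply le_S, gdist_le; constructor.
  - apply gdist_le, walk_edge, Huv.
Qed.

Lemma gdist_eq_1_edge u v n : walk E n u v -> gdist E u v = 1%nat -> E u v.
Proof. intros H H1. apply walk_1_inv. rewrite <- H1. exact (gdist_walk u v n H). Qed.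

Lemma gdist_le_walk u v n m :
  walk E n u v -> (gdist E u v <= m)%nat -> exists j, (j <= m)%nat /\ walk E j u v.
Proof. intros H Hm. exists (gdist E u v); split; eauto using gdist_walk. Qed.

End Walks.

Lemma walk_sub {V : Type} (E F : V -> V -> Prop) k u v :
  (forall x y, E x y -> F x y) -> walk E k u v -> walk F k u v.
Proof. intros EF H; induction H; econstructor; eauto. Qed.

Lemma gdist_le_sub {V : Type} (E F : V -> V -> Prop) k u v :
  (forall x y, E x y -> F x y) -> walk E k u v -> (gdist F u v <= gdist E u v)%nat.
Proof. intros EF H. apply gdist_le, (walk_sub E); eauto using gdist_walk. Qed.

Lemma gdist_le_mul {V : Type} (E F : V -> V -> Prop) c k u v :
  (forall x y, F x y -> exists j, (j <= c)%nat /\ walk E j x y) ->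
  walk F k u v -> (gdist E u v <= c * gdist F u v)%nat.
Proof.
  intros Fshort H.
  assert (Hlift : forall k u v, walk F k u v ->
            exists j, (j <= c * k)%nat /\ walk E j u v).
  { clear k u v H. induction 1 as [u|k u w v Fuw _ [j2 [Hj2 W2]]].
    - exists 0%nat; split; [lia|constructor].
    - destruct (Fshort u w Fuw) as [j1 [Hj1 W1]].
      exists (j1 + j2)%nat; split; [lia|eapply walk_cat; eauto]. }
  destruct (Hlift _ u v (gdist_walk F u v k H)) as [j [Hj W]].
  pose proof (gdist_le E u v j W). lia.
Qed.

Section Metric.
Context {T : Type} (d : T -> T -> R) (d_metric : is_metric d).

Lemma dist_refl x : d x x = 0.
Proof. now apply (proj1 d_metric). Qed.

Lemma dist_sym x y : d x y = d y x.
Proof. apply (proj1 (proj2 d_metric)). Qed.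

Lemma dist_tri x y z : d x z <= d x y + d y z.
Proof. apply (proj2 (proj2 d_metric)). Qed.

Lemma dist_nonneg x y : 0 <= d x y.
Proof. pose proof (dist_tri x y x) as Htri. rewrite dist_refl, (dist_sym y x) in Htri. lra. Qed.

Lemma balls_meet_sym x r y s : balls_meet d x r y s -> balls_meet d y s x r.
Proof. intros [z [Hxz Hyz]]. now exists z. Qed.

Lemma balls_meet_dist_lt x r y s : balls_meet d x r y s -> d x y < r + s.
Proof.
  intros [z [Hxz Hyz]]. pose proof (dist_tri x z y) as Htri. rewrite (dist_sym z y) in Htri. lra.
Qed.

Lemma balls_meet_of_dist_lt x r y s : d x y < r -> 0 < s -> balls_meet d x r y s.
Proof. intros Hxy Hs. exists y. now rewrite dist_refl. Qed.

End Metric.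

Lemma inv_pow_pos a n : 1 < a -> 0 < / a ^ n.
Proof. intros; apply Rinv_0_lt_compat, pow_lt; lra. Qed.

Lemma inv_pow_S a n : 1 < a -> / a ^ S n = / a ^ n * / a.
Proof. intros. simpl. rewrite Rinv_mult. ring. Qed.

Lemma div_pow_S_le a c r n : 1 < a -> c / a <= r -> c / a ^ S n <= r / a ^ n.
Proof.
  intros Ha Hc. unfold Rdiv in *. rewrite inv_pow_S by lra.
  pose proof (inv_pow_pos a n Ha). nra.
Qed.

Lemma inv_pow_S_add_lt a lam n : 1 < a -> lam > 1 + / a -> / a ^ S n + / a ^ n < lam / a ^ n.
Proof.
  intros Ha Hlam. rewrite inv_pow_S by lra. unfold Rdiv.
  pose proof (inv_pow_pos a n Ha). nra.
Qed.

Section Filling.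
Context {T : Type} (d : T -> T -> R) (lam a : R)
  (Xs : nat -> T -> Prop) (par : nat -> T -> T).
Hypotheses (d_metric : is_metric d) (a_gt1 : 1 < a) (filling : is_filling d a Xs par)
  (diam : is_diam d (1 / 2)).

Local Notation E1 := (edge1 d lam a Xs).
Local Notation E2 := (edge2 d lam a Xs par).

Lemma Xs_par n z : Xs (S n) z -> Xs n (par n z).
Proof. apply (proj2 (proj2 filling)). Qed.

Lemma dist_par_le n z w : Xs (S n) z -> Xs n w -> d z (par n z) <= d z w.
Proof. intros Hz. apply (proj2 (proj2 filling) n z Hz). Qed.

Lemma Xs_net n z : exists w, Xs n w /\ d z w < / a ^ n.
Proof.
  apply NNPP; intros Hfar.
  destruct (proj1 (proj2 filling) n) as [Hsep Hmax].
  assert (Hz : Xs n z).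
  { apply (Hmax (fun t => Xs n t \/ t = z)); auto.
    intros x y [Hx| ->] [Hy| ->] Hxy; auto.
    - apply Rnot_lt_le; intros Hlt. apply Hfar; exists x. now rewrite dist_sym.
    - apply Rnot_lt_le; intros Hlt. apply Hfar; eauto.
    - easy. }
  apply Hfar; exists z. rewrite dist_refl by auto. auto using inv_pow_pos.
Qed.

Lemma dist_par_lt n z : Xs (S n) z -> d z (par n z) < / a ^ n.
Proof.
  intros Hz. destruct (Xs_net n z) as [w [Hw Hzw]].
  pose proof (dist_par_le n z w Hz Hw). lra.
Qed.

Lemma dist_anc_le n j y :
  Xs (n + j) y -> d (anc par n j y) y <= a / (a - 1) * (/ a ^ n - / a ^ (n + j)).
Proof.
  revert y; induction j as [|j IH]; intros y Hy; simpl.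
  - rewrite Nat.add_0_r, dist_refl by auto. lra.
  - rewrite Nat.add_succ_r in *. set (p := par (n + j) y).
    pose proof (IH p (Xs_par _ _ Hy)).
    pose proof (dist_par_lt _ _ Hy) as Hyp; fold p in Hyp.
    pose proof (dist_tri d d_metric (anc par n j p) p y).
    rewrite (dist_sym d d_metric p y) in *.
    rewrite inv_pow_S by lra.
    (* the geometric series: a/(a-1) (a^-m - a^-(m+1)) = a^-m *)
    assert (a / (a - 1) * (/ a ^ n - / a ^ (n + j) * / a) =
            a / (a - 1) * (/ a ^ n - / a ^ (n + j)) + / a ^ (n + j)).
    { field. repeat split; try lra; apply pow_nonzero; lra. }
    lra.
Qed.

Lemma edge2_sym u v : E2 u v -> E2 v u.
Proof.
  intros [Hu [Hv [Huv Hadj]]]. repeat split; auto.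
  destruct Hadj as [H|[H|[Hn Hb]]]; auto using balls_meet_sym.
Qed.

Lemma edge2_par n z : Xs (S n) z -> E2 (z, S n) (par n z, n).
Proof.
  intros Hz. repeat split; unfold vert; simpl; auto using Xs_par.
  intros Heq; injection Heq; lia.
Qed.

Lemma edge2_edge1 u v : E2 u v -> E1 u v.
Proof.
  intros [Hu [Hv [Huv Hadj]]]. repeat split; auto.
  destruct u as [x n], v as [y m]; unfold vert in *; simpl in *.
  destruct Hadj as [[-> <-]|[[-> <-]|Hhor]]; auto; right; split; auto.
  - apply balls_meet_of_dist_lt; auto using inv_pow_pos.
    rewrite dist_sym by auto. now apply dist_par_lt.
  - apply balls_meet_sym, balls_meet_of_dist_lt; auto using inv_pow_pos.
    rewrite dist_sym by auto. now apply dist_par_lt.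
Qed.

Lemma walk2_to_root n x : Xs n x -> exists r, Xs 0 r /\ walk E2 n (x, n) (r, 0%nat).
Proof.
  revert x; induction n as [|n IH]; intros x Hx.
  - exists x; split; auto; constructor.
  - destruct (IH _ (Xs_par n x Hx)) as [r [Hr W]].
    exists r; split; auto. econstructor; [apply edge2_par, Hx|exact W].
Qed.

(* X_0 is 1-separated while diam X = 1/2, so the filling has a single root. *)
Lemma Xs0_unique x y : Xs 0 x -> Xs 0 y -> x = y.
Proof.
  destruct diam as [Hub _]; intros Hx Hy. apply NNPP; intros Hxy.
  pose proof (proj1 (proj1 (proj2 filling) 0%nat) x y Hx Hy Hxy) as Hsep.
  simpl in Hsep; rewrite Rinv_1 in Hsep.
  assert (d x y <= 1 / 2) by (apply Hub; eauto). lra.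
Qed.

Lemma walk2_connected u v : vert Xs u -> vert Xs v -> exists k, walk E2 k u v.
Proof.
  destruct u as [x n], v as [y m]; intros Hx Hy.
  destruct (walk2_to_root n x Hx) as [r [Hr Wx]].
  destruct (walk2_to_root m y Hy) as [r' [Hr' Wy]].
  rewrite (Xs0_unique r r' Hr Hr') in Wx.
  exists (n + m)%nat. eapply walk_cat; [exact Wx|].
  apply walk_rev; [exact edge2_sym|exact Wy].
Qed.

Lemma walk1_connected u v : vert Xs u -> vert Xs v -> exists k, walk E1 k u v.
Proof.
  intros Hu Hv. destruct (walk2_connected u v Hu Hv) as [k W].
  exists k. eapply walk_sub; [exact edge2_edge1|exact W].
Qed.

Lemma gdist2_parents_le1 n x y :
  Xs (S n) x -> Xs (S n) y -> d x y <= (lam - 2) / a ^ n ->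
  (gdist E2 (par n x, n) (par n y, n) <= 1)%nat.
Proof.
  intros Hx Hy Hxy. apply gdist_le_1.
  destruct (classic (par n x = par n y)) as [Heq|Hne]; [left; congruence|right].
  repeat split; unfold vert; simpl; auto using Xs_par.
  - intros Heq; injection Heq; auto.
  - right; right; split; auto.
    pose proof (dist_par_lt n x Hx). pose proof (dist_par_lt n y Hy).
    pose proof (dist_nonneg d d_metric x y).
    pose proof (dist_tri d d_metric (par n x) x y).
    pose proof (dist_tri d d_metric (par n x) y (par n y)).
    rewrite (dist_sym d d_metric (par n x) x) in *.
    pose proof (inv_pow_pos a n a_gt1).
    unfold Rdiv in *.
    apply balls_meet_of_dist_lt; auto; nra.
Qed.

Lemma gdist2_parents_le1_of_dist_lt n x y c :
  Xs (S n) x -> Xs (S n) y -> c / a <= lam - 2 -> d x y < c / a ^ S n ->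
  (gdist E2 (par n x, n) (par n y, n) <= 1)%nat.
Proof.
  intros Hx Hy Hc Hxy. apply gdist2_parents_le1; auto.
  pose proof (div_pow_S_le a c (lam - 2) n a_gt1 Hc). lra.
Qed.

Lemma edge2_same_level_dist_lt m x y : E2 (x, m) (y, m) -> d x y < 2 * lam / a ^ m.
Proof.
  intros [_ [_ [_ Hadj]]]; simpl in Hadj.
  destruct Hadj as [[Hm _]|[[Hm _]|[_ Hb]]]; try lia.
  apply balls_meet_dist_lt in Hb; auto. lra.
Qed.

Lemma walk2_length2_same_level n x y :
  walk E2 2 (x, S n) (y, S n) -> par n x = par n y \/ d x y < 4 * lam / a ^ S n.
Proof.
  intros W. destruct (walk_2_inv E2 _ _ W) as [[z m] [Exz Ezy]].
  destruct Exz as [_ [_ [_ Hxz]]], Ezy as [_ [_ [_ Hzy]]]; cbn [fst snd] in *.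
  destruct Hxz as [[Hm Hx]|[[Hm Hx]|[Hm Hb1]]];
  destruct Hzy as [[Hm' Hy]|[[Hm' Hy]|[Hm' Hb2]]]; subst; try lia.
  - left; congruence.
  - injection Hm as <-. left; congruence.
  - right. apply balls_meet_dist_lt in Hb1, Hb2; auto.
    pose proof (dist_tri d d_metric x z y). lra.
Qed.

Lemma edge1_down_walk2 n x y : lam > 1 + / a ->
  Xs (S n) x -> Xs n y -> balls_meet d x (/ a ^ S n) y (/ a ^ n) ->
  exists j, (j <= 2)%nat /\ walk E2 j (x, S n) (y, n).
Proof.
  intros Hlam Hx Hy Hb.
  destruct (classic (par n x = y)) as [<-|Hne].
  - exists 1%nat; split; auto. apply walk_edge, edge2_par, Hx.
  - exists 2%nat; split; auto. econstructor; [apply edge2_par, Hx|apply walk_edge].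
    pose proof (balls_meet_dist_lt d d_metric _ _ _ _ Hb).
    pose proof (inv_pow_S_add_lt a lam n a_gt1 Hlam).
    pose proof (dist_par_le n x y Hx Hy).
    repeat split; unfold vert; simpl; auto using Xs_par.
    + intros Heq; injection Heq; auto.
    + right; right; split; auto. exists x.
      rewrite !(dist_sym d d_metric _ x). split; lra.
Qed.

Lemma edge1_walk2 u v : lam > 1 + / a ->
  E1 u v -> exists j, (j <= 2)%nat /\ walk E2 j u v.
Proof.
  intros Hlam E. destruct E as [Hu [Hv [Huv Hadj]]].
  destruct u as [x n], v as [y m]; unfold vert in *; simpl in *.
  destruct Hadj as [[Hnm Hb]|[[->| ->] Hb]].
  - exists 1%nat; split; auto. apply walk_edge. repeat split; auto.
  - now apply edge1_down_walk2.
  - destruct (edge1_down_walk2 n y x Hlam Hv Hu (balls_meet_sym d _ _ _ _ Hb))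
      as [j [Hj W]].
    exists j; split; auto. apply walk_rev; [exact edge2_sym|exact W].
Qed.

Lemma edge2_of_common_neighbour n u v w : lam > 1 + / a ->
  E1 (u, n) (w, S n) -> E2 (v, n) (w, S n) -> (u, n) = (v, n) \/ E2 (u, n) (v, n).
Proof.
  intros Hlam [Hu [Hw [_ Huw]]] [Hv [_ [_ Hvw]]].
  unfold vert in *; cbn [fst snd] in *.
  destruct Huw as [[Hn _]|[_ Hb]]; [lia|].
  destruct Hvw as [[_ Hpar]|[[Hn _]|[Hn _]]]; try lia.
  destruct (classic (u = v)) as [->|Hne]; [now left|right].
  apply balls_meet_dist_lt in Hb; auto.
  pose proof (inv_pow_S_add_lt a lam n a_gt1 Hlam) as Hrad.
  pose proof (dist_par_le n w u Hw Hu) as Hwv; rewrite Hpar in Hwv.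
  repeat split; unfold vert; simpl; auto.
  - intros Heq; injection Heq; auto.
  - right; right; split; auto. exists w.
    rewrite (dist_sym d d_metric v w), (dist_sym d d_metric w u) in *. split; lra.
Qed.

Lemma dist_child_lt n x z : child Xs par n x z -> d x z < / a ^ n.
Proof. intros [_ [Hz <-]]. rewrite dist_sym by auto. now apply dist_par_lt. Qed.

Lemma dist_descendant_lt n x k y :
  descendant Xs par n x k y -> d x y < a / (a - 1) * / a ^ n.
Proof.
  intros [Hnk [_ [Hy <-]]].
  replace k with (n + (k - n))%nat in Hy by lia.
  pose proof (dist_anc_le n (k - n) y Hy).
  pose proof (inv_pow_pos a (n + (k - n)) a_gt1).
  assert (0 < a / (a - 1)) by (apply Rdiv_lt_0_compat; lra). nra.
Qed.

Lemma gdist2_parents_le1_of_gdist2_le1 n x y : lam >= 2 + 2 * lam / a ->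
  Xs (S n) x -> Xs (S n) y -> (gdist E2 (x, S n) (y, S n) <= 1)%nat ->
  (gdist E2 (par n x, n) (par n y, n) <= 1)%nat.
Proof.
  intros Hlam Hx Hy H1. destruct (walk2_connected (x, S n) (y, S n) Hx Hy) as [k W].
  destruct (gdist_le_walk _ _ _ k 1 W H1) as [[|[|j]] [Hj Wj]]; try lia.
  - apply walk_0_inv in Wj; injection Wj as <-. now apply gdist_le_1; left.
  - apply gdist2_parents_le1_of_dist_lt with (2 * lam); auto; [lra|].
    now apply edge2_same_level_dist_lt, walk_1_inv.
Qed.

Lemma gdist2_parents_le1_of_gdist2_le2 n x y : lam >= 2 + 4 * lam / a ->
  Xs (S n) x -> Xs (S n) y -> (gdist E2 (x, S n) (y, S n) <= 2)%nat ->
  (gdist E2 (par n x, n) (par n y, n) <= 1)%nat.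
Proof.
  intros Hlam Hx Hy H2. destruct (walk2_connected (x, S n) (y, S n) Hx Hy) as [k W].
  destruct (gdist_le_walk _ _ _ k 2 W H2) as [[|[|[|j]]] [Hj Wj]]; try lia.
  - apply walk_0_inv in Wj; injection Wj as <-. now apply gdist_le_1; left.
  - apply gdist2_parents_le1_of_dist_lt with (4 * lam); auto; [lra|].
    apply walk_1_inv, edge2_same_level_dist_lt in Wj.
    pose proof (dist_nonneg d d_metric x y). lra.
  - destruct (walk2_length2_same_level n x y Wj) as [Hpar|Hxy].
    + apply gdist_le_1; left; congruence.
    + apply gdist2_parents_le1_of_dist_lt with (4 * lam); auto; lra.
Qed.

Lemma gdist2_parents_le1_of_dist_le n x y : lam >= 6 ->
  Xs (S n) x -> Xs (S n) y -> d x y <= 4 / a ^ n ->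
  (gdist E2 (par n x, n) (par n y, n) <= 1)%nat.
Proof.
  intros Hlam Hx Hy Hxy. apply gdist2_parents_le1; auto.
  pose proof (inv_pow_pos a n a_gt1). unfold Rdiv in *. nra.
Qed.

Lemma gdist1_le_gdist2 u v :
  vert Xs u -> vert Xs v -> (gdist E1 u v <= gdist E2 u v)%nat.
Proof.
  intros Hu Hv. destruct (walk2_connected u v Hu Hv) as [k W].
  exact (gdist_le_sub E2 E1 k u v edge2_edge1 W).
Qed.

Lemma gdist2_le_double_gdist1 u v : lam > 1 + / a ->
  vert Xs u -> vert Xs v -> (gdist E2 u v <= 2 * gdist E1 u v)%nat.
Proof.
  intros Hlam Hu Hv. destruct (walk1_connected u v Hu Hv) as [k W].
  apply (gdist_le_mul E2 E1 2 k u v); [exact (fun x y => edge1_walk2 x y Hlam)|exact W].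
Qed.

Lemma gdist2_le1_of_common_neighbour n w u v : lam > 1 + / a ->
  vert Xs (w, S n) -> vert Xs (u, n) -> vert Xs (v, n) ->
  gdist E1 (u, n) (w, S n) = 1%nat -> gdist E2 (v, n) (w, S n) = 1%nat ->
  (gdist E2 (u, n) (v, n) <= 1)%nat.
Proof.
  intros Hlam Hw Hu Hv H1 H2.
  destruct (walk1_connected _ _ Hu Hw) as [k1 W1].
  destruct (walk2_connected _ _ Hv Hw) as [k2 W2].
  apply gdist_le_1, (edge2_of_common_neighbour n u v w Hlam);
    eapply gdist_eq_1_edge; eauto.
Qed.

End Filling.

Theorem lemma2p4 (T : Type) (d : T -> T -> R) (lam a : R)
  (Xs : nat -> T -> Prop) (par : nat -> T -> T) :
  is_metric d -> compact_metric d -> is_diam d (1/2) ->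
  1 < lam -> 1 < a -> is_filling d a Xs par ->
  let D1 := gdist (edge1 d lam a Xs) in
  let D2 := gdist (edge2 d lam a Xs par) in
  (* (a) *)
  ((forall n x z, child Xs par n x z -> d x z < / a ^ n) /\
   (forall n x k y, descendant Xs par n x k y ->
      d x y < a / (a - 1) * / a ^ n)) /\
  (* (b) *)
  ((lam >= 2 + 2 * lam / a ->
     forall n x y, Xs (S n) x -> Xs (S n) y ->
       (D2 (x, S n) (y, S n) <= 1)%nat ->
       (D2 (par n x, n) (par n y, n) <= 1)%nat) /\
   (lam >= 2 + 4 * lam / a ->
     forall n x y, Xs (S n) x -> Xs (S n) y ->
       (D2 (x, S n) (y, S n) <= 2)%nat ->
       (D2 (par n x, n) (par n y, n) <= 1)%nat)) /\
  (* (c) *)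
  (lam >= 6 ->
     forall n x y, Xs (S n) x -> Xs (S n) y -> d x y <= 4 / a ^ n ->
       (D2 (par n x, n) (par n y, n) <= 1)%nat) /\
  (* (d) *)
  (lam > 1 + / a ->
     forall u v, vert Xs u -> vert Xs v ->
       (D1 u v <= D2 u v)%nat /\ (D2 u v <= 2 * D1 u v)%nat) /\
  (* (e) *)
  (lam > 1 + / a ->
     forall n w u v, vert Xs (w, S n) -> vert Xs (u, n) -> vert Xs (v, n) ->
       D1 (u, n) (w, S n) = 1%nat -> D2 (v, n) (w, S n) = 1%nat ->
       (D2 (u, n) (v, n) <= 1)%nat).
Proof.
  intros Hm _ Hdiam _ Ha Hf D1 D2.
  repeat split; intros.
  - eapply dist_child_lt; eauto.
  - eapply dist_descendant_lt; eauto.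
  - eapply gdist2_parents_le1_of_gdist2_le1; eauto.
  - eapply gdist2_parents_le1_of_gdist2_le2; eauto.
  - eapply gdist2_parents_le1_of_dist_le; eauto.
  - eapply gdist1_le_gdist2; eauto.
  - eapply gdist2_le_double_gdist1; eauto.
  - eapply gdist2_le1_of_common_neighbour; eauto.
Qed.
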